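(* Let $\kappa\in[1,2]$. There exists a real-valued function $h\in C_c^\infty(\mathbb R)$ with support contained in $[0,\infty)$ such that $$\int_{-1}^{1}\overline{\widehat h(-\xi)}\,\widehat h(\xi)\,\frac{d\xi}{\xi^2+\kappa}<0.$$
   Context: $\widehat h(\xi)=\int_{\mathbb R}h(x)e^{i\xi x}\,dx$ denotes the Fourier transform (the sign convention in the exponent is immaterial here). *)

From Stdlib Require Import Reals.
From Coquelicot Require Import Coquelicot.
Open Scope R_scope.

Definition smooth (h : R -> R) : Prop :=
  forall (n : nat) (x : R), ex_derive_n h n x.

Definition compact_support (h : R -> R) : Prop :=
  exists M : R, forall x : R, M < Rabs x -> h x = 0.

(* supp h is contained in [0, +oo) (equivalently, since [0,oo) is closed,
   h vanishes on (-oo, 0)). *)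
Definition support_in_nonneg (h : R -> R) : Prop :=
  forall x : R, x < 0 -> h x = 0.

(* Fourier transform  \hat h(xi) = \int_R h(x) e^{i xi x} dx,
   with e^{i t} = (cos t, sin t) (Coquelicot has no complex exp), as a C-valued improper Riemann integral over (-oo, +oo). *)
Definition fourier (h : R -> R) (xi : R) : C :=
  RInt_gen (V := C_R_CompleteNormedModule)
    (fun x : R => scal (h x) ((cos (xi * x), sin (xi * x)) : C))
    (Rbar_locally m_infty) (Rbar_locally p_infty).

From Stdlib Require Import Reals Lra Lia FunctionalExtensionality.
From Coquelicot Require Import Coquelicot.
Open Scope R_scope.

(* Let g be the bump exp(-1/(x(1/2 - x))) on (0, 1/2), so that 0 <= g <= 1, and
   put h := g'. Its smoothness comes from the fact that the functions
   r(x) P(1/q(x)) e^(-1/q(x)) (r, P, q polynomials, extended by 0 where q <= 0)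
   are smooth and form a family closed under differentiation.
   Integration by parts gives  hhat(xi) = -i xi ghat(xi)  with
   ghat = g_cos + i g_sin, and since h is real,
   conj(hhat(-xi)) hhat(xi) = hhat(xi)^2 = -xi^2 ghat(xi)^2.
   For |xi| <= 1 the phase xi x stays in [-1/2, 1/2] on the support of g, so
   g_cos >= 7/8 (int g) and |g_sin| <= 1/2 (int g): the real part of the
   integrand is at most -xi^2 (int g)^2 / 6, while its imaginary part is odd
   in xi and integrates to 0. *)

Inductive is_poly : (R -> R) -> Prop :=
| is_poly_const c : is_poly (fun _ => c)
| is_poly_id : is_poly (fun y => y)
| is_poly_plus p q : is_poly p -> is_poly q -> is_poly (fun y => p y + q y)
| is_poly_mult p q : is_poly p -> is_poly q -> is_poly (fun y => p y * q y).

Lemma is_poly_ext p q : (forall y, p y = q y) -> is_poly p -> is_poly q.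
Proof. intros E Hp. replace q with p by (apply functional_extensionality; exact E). exact Hp. Qed.

Lemma is_poly_affine a b : is_poly (fun y => a + b * y).
Proof. repeat constructor. Qed.

Lemma is_poly_minus p q : is_poly p -> is_poly q -> is_poly (fun y => p y - q y).
Proof.
  intros Hp Hq. apply is_poly_ext with (fun y => p y + (-1) * q y); [intro; ring|].
  apply is_poly_plus; [exact Hp | apply is_poly_mult; [apply is_poly_const | exact Hq]].
Qed.

Lemma is_poly_pow n : is_poly (fun y => y ^ n).
Proof.
  induction n as [|n IH]; [exact (is_poly_const 1)|].
  apply is_poly_mult; [apply is_poly_id | exact IH].
Qed.

Lemma is_poly_derive p :
  is_poly p -> exists p', is_poly p' /\ forall y, is_derive p y (p' y).
Proof.
  induction 1 as [c| |p q _ [p' [Hp' Dp]] _ [q' [Hq' Dq]]|p q Hp [p' [Hp' Dp]] Hq [q' [Hq' Dq]]].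
  - exists (fun _ => 0); split; [constructor | intro y; apply (is_derive_const c y)].
  - exists (fun _ => 1); split; [constructor | intro y; apply (is_derive_id y)].
  - exists (fun y => p' y + q' y); split; [now apply is_poly_plus | intro y; now apply (is_derive_plus p q)].
  - exists (fun y => p' y * q y + p y * q' y); split.
    + repeat constructor; assumption.
    + intro y. apply (is_derive_mult p q y); auto. intros; apply Rmult_comm.
Qed.

Lemma is_poly_bound p :
  is_poly p -> exists C n, 0 <= C /\ forall y, 0 <= y -> Rabs (p y) <= C * (1 + y) ^ n.
Proof.
  induction 1 as [c| |p q _ [C1 [n1 [HC1 B1]]] _ [C2 [n2 [HC2 B2]]]
                 |p q _ [C1 [n1 [HC1 B1]]] _ [C2 [n2 [HC2 B2]]]].
  - exists (Rabs c), 0%nat. split; [apply Rabs_pos | intros y _; simpl; lra].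
  - exists 1, 1%nat. split; [lra | intros y Hy; simpl; rewrite Rabs_pos_eq; lra].
  - exists (C1 + C2), (n1 + n2)%nat. split; [lra | intros y Hy].
    assert (E1 : (1 + y) ^ n1 <= (1 + y) ^ (n1 + n2)) by (apply Rle_pow; [lra | lia]).
    assert (E2 : (1 + y) ^ n2 <= (1 + y) ^ (n1 + n2)) by (apply Rle_pow; [lra | lia]).
    specialize (B1 y Hy); specialize (B2 y Hy).
    pose proof (Rabs_triang (p y) (q y)).
    pose proof (Rmult_le_compat_l C1 _ _ HC1 E1).
    pose proof (Rmult_le_compat_l C2 _ _ HC2 E2). lra.
  - exists (C1 * C2), (n1 + n2)%nat. split; [now apply Rmult_le_pos | intros y Hy].
    rewrite Rabs_mult, pow_add.
    replace (C1 * C2 * ((1 + y) ^ n1 * (1 + y) ^ n2))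
      with ((C1 * (1 + y) ^ n1) * (C2 * (1 + y) ^ n2)) by ring.
    apply Rmult_le_compat; auto using Rabs_pos.
Qed.

Lemma pow_le_exp (m : nat) (y : R) :
  0 <= y -> (1 + y) ^ S m <= INR (S m) ^ S m * exp y.
Proof.
  intros Hy. set (M := INR (S m)).
  assert (HM : 1 <= M) by (unfold M; rewrite S_INR; pose proof (pos_INR m); lra).
  assert (Hbase : (1 + y) / M <= exp (y / M)).
  { apply Rle_trans with (1 + y / M); [|apply exp_ineq1_le].
    unfold Rdiv. assert (/ M <= 1) by (rewrite <- Rinv_1; apply Rinv_le_contravar; lra).
    assert (0 < / M) by (apply Rinv_0_lt_compat; lra). nra. }
  assert (Hexp : exp (y / M) ^ S m = exp y).
  { rewrite <- Rpower_pow by apply exp_pos. unfold Rpower. rewrite ln_exp.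
    f_equal. fold M. field. lra. }
  replace ((1 + y) ^ S m) with (M ^ S m * ((1 + y) / M) ^ S m).
  2:{ unfold Rdiv. rewrite Rpow_mult_distr, pow_inv. field. apply pow_nonzero; lra. }
  apply Rmult_le_compat_l; [apply pow_le; lra|].
  rewrite <- Hexp. apply pow_incr. split; [|exact Hbase].
  apply Rdiv_le_0_compat; lra.
Qed.

Definition poly_expinv (P : R -> R) (t : R) : R :=
  if Rlt_dec 0 t then P (/ t) * exp (- / t) else 0.

Lemma poly_expinv_nonpos P t : t <= 0 -> poly_expinv P t = 0.
Proof. intros Ht. unfold poly_expinv. destruct Rlt_dec; [lra | reflexivity]. Qed.

Lemma poly_expinv_sq_bound P :
  is_poly P -> exists K, forall t, Rabs (poly_expinv P t) <= K * t ^ 2.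
Proof.
  intros HP. destruct (is_poly_bound P HP) as [C [n [HC B]]].
  set (M := INR (S (S n)) ^ S (S n)).
  assert (HM : 0 < M) by (apply pow_lt, lt_0_INR; lia).
  exists (C * M). intro t.
  destruct (Rlt_dec 0 t) as [Ht | Ht].
  2:{ rewrite poly_expinv_nonpos, Rabs_R0 by lra.
      apply Rmult_le_pos; [apply Rmult_le_pos; lra | apply pow2_ge_0]. }
  unfold poly_expinv. destruct Rlt_dec; [|lra].
  set (y := / t).
  assert (Hy : 0 < y) by (apply Rinv_0_lt_compat; lra).
  assert (Hty : t ^ 2 * y ^ 2 = 1) by (unfold y; field; lra).
  assert (Hexp : exp (- y) * exp y = 1) by (rewrite <- exp_plus, Rplus_opp_l; apply exp_0).
  pose proof (pow_le_exp (S n) y (Rlt_le _ _ Hy)) as Hgrowth. fold M in Hgrowth.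
  assert (Hsplit : (1 + y) ^ S (S n) = (1 + y) ^ n * (1 + y) ^ 2).
  { rewrite <- pow_add. f_equal. lia. }
  assert (y ^ 2 <= (1 + y) ^ 2) by (apply pow_incr; lra).
  assert (0 <= (1 + y) ^ n) by (apply pow_le; lra).
  assert (0 < exp (- y)) by apply exp_pos.
  assert (0 < t ^ 2) by (apply pow_lt; lra).
  rewrite Rabs_mult, (Rabs_pos_eq (exp _)) by lra.
  apply Rle_trans with (C * (1 + y) ^ n * exp (- y)).
  { apply Rmult_le_compat_r; [lra | apply B; lra]. }
  rewrite !Rmult_assoc. apply Rmult_le_compat_l; [exact HC|].
  assert (Hpoly : (1 + y) ^ n * y ^ 2 <= M * exp y) by nra.
  apply Rmult_le_compat_r with (r := t ^ 2 * exp (- y)) in Hpoly; [|nra].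
  replace ((1 + y) ^ n * exp (- y)) with ((1 + y) ^ n * y ^ 2 * (t ^ 2 * exp (- y)))
    by (transitivity ((1 + y) ^ n * exp (- y) * (t ^ 2 * y ^ 2)); [ring | rewrite Hty; ring]).
  replace (M * t ^ 2) with (M * exp y * (t ^ 2 * exp (- y)))
    by (transitivity (M * t ^ 2 * (exp (- y) * exp y)); [ring | rewrite Hexp; ring]).
  exact Hpoly.
Qed.

Lemma is_derive_0_of_sq_bound (f : R -> R) (K : R) :
  f 0 = 0 -> (forall t, Rabs (f t) <= K * t ^ 2) -> is_derive f 0 0.
Proof.
  intros H0 Hf. apply is_derive_Reals.
  assert (HK : 0 <= K) by (specialize (Hf 1); pose proof (Rabs_pos (f 1)); simpl in Hf; lra).
  intros eps Heps. assert (Hd : 0 < eps / (K + 1)) by (apply Rdiv_lt_0_compat; lra).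
  exists (mkposreal _ Hd). intros t Ht Hta. simpl in Hta.
  rewrite Rplus_0_l, H0, !Rminus_0_r.
  assert (Habs : 0 < Rabs t) by (apply Rabs_pos_lt; exact Ht).
  unfold Rdiv. rewrite Rabs_mult, Rabs_inv.
  apply Rle_lt_trans with (K * Rabs t).
  { apply Rle_trans with (K * t ^ 2 * / Rabs t).
    - apply Rmult_le_compat_r; [left; apply Rinv_0_lt_compat; lra | apply Hf].
    - right. rewrite <- (pow2_abs t). field. lra. }
  apply Rle_lt_trans with (K * (eps / (K + 1))); [apply Rmult_le_compat_l; lra|].
  apply Rmult_lt_reg_r with (K + 1); [lra|].
  replace (K * (eps / (K + 1)) * (K + 1)) with (K * eps) by (field; lra). nra.
Qed.

Lemma is_derive_poly_expinv P P' t :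
  is_poly P -> (forall y, is_derive P y (P' y)) ->
  is_derive (poly_expinv P) t (poly_expinv (fun y => y ^ 2 * (P y - P' y)) t).
Proof.
  intros HP DP.
  destruct (Rtotal_order t 0) as [Hlt | [-> | Hgt]].
  - rewrite poly_expinv_nonpos by lra.
    apply is_derive_ext_loc with (fun _ => 0); [|apply (is_derive_const 0 t)].
    exists (mkposreal (- t) ltac:(lra)). intros s Hs.
    apply Rabs_def2 in Hs. simpl in Hs. change (minus s t) with (s - t) in Hs.
    symmetry. apply poly_expinv_nonpos. lra.
  - rewrite poly_expinv_nonpos by lra.
    destruct (poly_expinv_sq_bound P HP) as [K HK].
    apply (is_derive_0_of_sq_bound _ K); [apply poly_expinv_nonpos; lra | exact HK].
  - apply is_derive_ext_loc with (fun s => P (/ s) * exp (- / s)).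
    { exists (mkposreal t Hgt). intros s Hs.
      apply Rabs_def2 in Hs. simpl in Hs. change (minus s t) with (s - t) in Hs.
      unfold poly_expinv. destruct Rlt_dec; [reflexivity | lra]. }
    unfold poly_expinv. destruct Rlt_dec as [_ | Ht]; [|lra].
    assert (Dinv : is_derive (fun s : R => / s) t (- / t ^ 2)).
    { auto_derive; [lra | field; lra]. }
    replace ((/ t) ^ 2 * (P (/ t) - P' (/ t)) * exp (- / t))
      with (- / t ^ 2 * P' (/ t) * exp (- / t) + P (/ t) * (- (- / t ^ 2) * exp (- / t)))
      by (field; lra).
    apply (is_derive_mult (fun s => P (/ s)) (fun s => exp (- / s))).
    + apply (is_derive_comp P (fun s => / s)); [apply DP | exact Dinv].
    + apply (is_derive_comp exp (fun s => - / s)); [apply is_derive_exp|].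
      apply (is_derive_opp (fun s => / s)). exact Dinv.
    + intros; apply Rmult_comm.
Qed.

Section PolyExpinvComb.

Variable q : R -> R.
Hypothesis q_poly : is_poly q.

Inductive poly_expinv_comb : (R -> R) -> Prop :=
| poly_expinv_comb_term r P :
    is_poly r -> is_poly P -> poly_expinv_comb (fun x => r x * poly_expinv P (q x))
| poly_expinv_comb_plus f g :
    poly_expinv_comb f -> poly_expinv_comb g -> poly_expinv_comb (fun x => f x + g x).

Lemma poly_expinv_comb_derive f :
  poly_expinv_comb f -> exists f', poly_expinv_comb f' /\ forall x, is_derive f x (f' x).
Proof.
  destruct (is_poly_derive q q_poly) as [q' [Hq' Dq]].
  induction 1 as [r P Hr HP | f g _ [f' [Hf' Df]] _ [g' [Hg' Dg]]].
  - destruct (is_poly_derive r Hr) as [r' [Hr' Dr]].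
    destruct (is_poly_derive P HP) as [P' [HP' DP]].
    set (dP := fun y => y ^ 2 * (P y - P' y)).
    exists (fun x => r' x * poly_expinv P (q x) + (r x * q' x) * poly_expinv dP (q x)).
    split.
    + apply poly_expinv_comb_plus; apply poly_expinv_comb_term; auto.
      * now apply is_poly_mult.
      * apply is_poly_mult; [apply is_poly_pow | now apply is_poly_minus].
    + intro x.
      replace (r' x * poly_expinv P (q x) + r x * q' x * poly_expinv dP (q x))
        with (r' x * poly_expinv P (q x) + r x * (q' x * poly_expinv dP (q x))) by ring.
      apply (is_derive_mult r (fun x => poly_expinv P (q x))); [apply Dr | | intros; apply Rmult_comm].
      apply (is_derive_comp (poly_expinv P) q); [apply is_derive_poly_expinv; auto | apply Dq].
  - exists (fun x => f' x + g' x). split; [now apply poly_expinv_comb_plus|].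
    intro x. now apply (is_derive_plus f g).
Qed.

Lemma poly_expinv_comb_smooth f : poly_expinv_comb f -> smooth f.
Proof.
  intros Hf.
  assert (Hn : forall n, exists g, poly_expinv_comb g /\ Derive_n f n = g).
  { induction n as [|n [g [Hg E]]]; [now exists f|].
    destruct (poly_expinv_comb_derive g Hg) as [g' [Hg' Dg]].
    exists g'. split; [exact Hg'|]. simpl. rewrite E.
    apply functional_extensionality. intro x. apply is_derive_unique, Dg. }
  intros [|n] x; [exact I|]. simpl.
  destruct (Hn n) as [g [Hg ->]]. destruct (poly_expinv_comb_derive g Hg) as [g' [_ Dg]].
  exists (g' x). apply Dg.
Qed.

End PolyExpinvComb.

Lemma continuous_cos_lin (xi x : R) : continuous (fun x => cos (xi * x)) x.
Proof.
  apply continuous_cos_comp, (continuous_mult (K := R_AbsRing));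
    [apply continuous_const | apply continuous_id].
Qed.

Lemma continuous_sin_lin (xi x : R) : continuous (fun x => sin (xi * x)) x.
Proof.
  apply continuous_sin_comp, (continuous_mult (K := R_AbsRing));
    [apply continuous_const | apply continuous_id].
Qed.

Lemma continuous_pow_comp (f : R -> R) (n : nat) (x : R) :
  continuous f x -> continuous (fun x => f x ^ n) x.
Proof.
  intros Hf. apply (continuous_comp f (fun y => y ^ n)); [exact Hf|].
  apply (ex_derive_continuous (V := R_NormedModule)). auto_derive. exact I.
Qed.

Lemma sin_lipschitz s t : Rabs (sin s - sin t) <= Rabs (s - t).
Proof.
  rewrite <- (Rmult_1_l (Rabs (s - t))). apply (bounded_variation sin cos).
  intros u _. split; [apply is_derive_sin | apply Rabs_le, COS_bound].
Qed.

Lemma cos_lipschitz s t : Rabs (cos s - cos t) <= Rabs (s - t).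
Proof.
  rewrite <- (Rmult_1_l (Rabs (s - t))). apply (bounded_variation cos (fun u => - sin u)).
  intros u _. split; [apply is_derive_cos | rewrite Rabs_Ropp; apply Rabs_le, SIN_bound].
Qed.

Lemma Rabs_sin_le t : Rabs (sin t) <= Rabs t.
Proof. pose proof (sin_lipschitz t 0) as H. now rewrite sin_0, !Rminus_0_r in H. Qed.

Lemma cos_ge_1_sub_sq t : 1 - t ^ 2 / 2 <= cos t.
Proof.
  replace t with (2 * (t / 2)) at 2 by field. rewrite cos_2a_sin.
  assert (H : sin (t / 2) ^ 2 <= (t / 2) ^ 2).
  { rewrite <- (pow2_abs (sin _)), <- (pow2_abs (t / 2)).
    apply pow_incr. split; [apply Rabs_pos | apply Rabs_sin_le]. }
  simpl in *. lra.
Qed.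

Lemma lipschitz_continuous (f : R -> R) (L x : R) :
  (forall s t, Rabs (f s - f t) <= L * Rabs (s - t)) -> continuous f x.
Proof.
  intros Hf.
  assert (HL : 0 <= L).
  { specialize (Hf 1 0). rewrite Rminus_0_r, Rabs_R1 in Hf. pose proof (Rabs_pos (f 1 - f 0)). lra. }
  apply continuity_pt_filterlim. intros eps Heps.
  exists (eps / (L + 1)). split; [apply Rdiv_lt_0_compat; lra|].
  intros y [_ Hy]. simpl in *. unfold R_dist in *.
  apply Rle_lt_trans with (L * (eps / (L + 1))).
  - eapply Rle_trans; [apply Hf | apply Rmult_le_compat_l; lra].
  - apply Rmult_lt_reg_r with (L + 1); [lra|].
    replace (L * (eps / (L + 1)) * (L + 1)) with (L * eps) by (field; lra). nra.
Qed.

Lemma continuous_RInt_lipschitz_kernel (f T : R -> R) (b M xi : R) :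
  0 <= b -> (forall x, continuous f x) -> (forall x, 0 <= x <= b -> Rabs (f x) <= M) ->
  (forall s t, Rabs (T s - T t) <= Rabs (s - t)) ->
  continuous (fun xi => RInt (fun x => f x * T (xi * x)) 0 b) xi.
Proof.
  intros Hb Cf Bf HT.
  assert (CT : forall s, continuous T s)
    by (intro s; apply (lipschitz_continuous T 1); intros; rewrite Rmult_1_l; apply HT).
  assert (Hex : forall xi, ex_RInt (fun x => f x * T (xi * x)) 0 b).
  { intro eta. apply (ex_RInt_continuous (V := R_CompleteNormedModule)). intros x _.
    apply (continuous_mult (K := R_AbsRing)); [apply Cf|].
    apply (continuous_comp (fun x => eta * x) T); [|apply CT].
    apply (continuous_mult (K := R_AbsRing)); [apply continuous_const | apply continuous_id]. }
  apply (lipschitz_continuous _ (b * (b * M))). intros s t.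
  assert (E := RInt_minus (V := R_CompleteNormedModule) _ _ 0 b (Hex s) (Hex t)).
  unfold minus, plus, opp in E; simpl in E.
  replace (RInt (fun x => f x * T (s * x)) 0 b - RInt (fun x => f x * T (t * x)) 0 b)
    with (RInt (fun x => f x * T (s * x) + - (f x * T (t * x))) 0 b) by now rewrite E.
  assert (HM : 0 <= M) by (pose proof (Bf 0 ltac:(lra)); pose proof (Rabs_pos (f 0)); lra).
  apply Rle_trans with ((b - 0) * (b * M * Rabs (s - t))); [|right; ring].
  apply abs_RInt_le_const; [lra | apply (ex_RInt_minus (V := R_CompleteNormedModule)); auto|].
  intros x Hx.
  replace (f x * T (s * x) + - (f x * T (t * x))) with (f x * (T (s * x) - T (t * x))) by ring.
  rewrite Rabs_mult.
  assert (HTx : Rabs (T (s * x) - T (t * x)) <= x * Rabs (s - t)).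
  { eapply Rle_trans; [apply HT|]. right.
    replace (s * x - t * x) with ((s - t) * x) by ring.
    rewrite Rabs_mult, (Rabs_pos_eq x) by lra. ring. }
  pose proof (Bf x Hx). pose proof (Rabs_pos (f x)). pose proof (Rabs_pos (s - t)).
  pose proof (Rabs_pos (T (s * x) - T (t * x))).
  apply Rle_trans with (M * (x * Rabs (s - t))); [apply Rmult_le_compat; lra|].
  replace (b * M * Rabs (s - t)) with (M * (b * Rabs (s - t))) by ring.
  apply Rmult_le_compat_l; [lra | apply Rmult_le_compat_r; lra].
Qed.

Lemma is_RInt_gen_of_support {V : NormedModule R_AbsRing} (f : R -> V) (a b : R) (l : V) :
  a <= b -> (forall x, x <= a \/ b <= x -> f x = zero) -> is_RInt f a b l ->
  is_RInt_gen f (Rbar_locally m_infty) (Rbar_locally p_infty) l.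
Proof.
  intros Hab Hf Hl.
  assert (Hzero : forall c d, (forall x, Rmin c d < x < Rmax c d -> f x = zero) ->
                  is_RInt f c d zero).
  { intros c d Hcd. pose proof (is_RInt_const c d (@zero V)) as H0.
    rewrite (@scal_zero_r R_AbsRing V) in H0.
    apply is_RInt_ext with (fun _ => zero); [intros; symmetry; auto | exact H0]. }
  apply filterlimi_lim_ext_loc with (f := fun _ => l); [|apply filterlim_const].
  apply Filter_prod with (Q := fun c => c < a) (R := fun d => b < d);
    [now exists a | now exists b|].
  intros c d Hc Hd. simpl.
  replace l with (plus (plus zero l) (@zero V)) by now rewrite plus_zero_l, plus_zero_r.
  apply (is_RInt_Chasles f c b d).
  - apply (is_RInt_Chasles f c a b).
    + apply Hzero. intros x Hx. apply Hf. rewrite Rmin_left, Rmax_right in Hx by lra. left; lra.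
    + exact Hl.
  - apply Hzero. intros x Hx. apply Hf. rewrite Rmin_left, Rmax_right in Hx by lra. right; lra.
Qed.

Lemma fourier_of_support (f : R -> R) (a b xi : R) :
  a <= b -> (forall x, continuous f x) -> (forall x, x <= a \/ b <= x -> f x = 0) ->
  fourier f xi = (RInt (fun x => f x * cos (xi * x)) a b, RInt (fun x => f x * sin (xi * x)) a b).
Proof.
  intros Hab Hc Hf. unfold fourier. apply (is_RInt_gen_unique (V := C_R_CompleteNormedModule)).
  apply (is_RInt_gen_of_support (V := C_R_NormedModule) _ a b); [exact Hab| |].
  - intros x Hx. rewrite Hf by exact Hx. exact (scal_zero_l (K := R_AbsRing) (V := C_R_NormedModule) _).
  - apply (is_RInt_fct_extend_pair (U := R_NormedModule) (V := R_NormedModule));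
      apply (RInt_correct (V := R_CompleteNormedModule)), ex_RInt_continuous; intros x _;
      apply (continuous_mult (K := R_AbsRing)); auto.
    + apply continuous_cos_lin.
    + apply continuous_sin_lin.
Qed.

Lemma RInt_parts_vanishing (f df k dk : R -> R) (a b : R) :
  (forall x, is_derive f x (df x)) -> (forall x, is_derive k x (dk x)) ->
  (forall x, continuous df x) -> (forall x, continuous dk x) ->
  f a = 0 -> f b = 0 ->
  RInt (fun x => df x * k x) a b = - RInt (fun x => f x * dk x) a b.
Proof.
  intros Df Dk Cdf Cdk Ha Hb.
  assert (Cf : forall x, continuous f x)
    by (intro x; apply (ex_derive_continuous (V := R_NormedModule)); exists (df x); apply Df).
  assert (Ck : forall x, continuous k x)
    by (intro x; apply (ex_derive_continuous (V := R_NormedModule)); exists (dk x); apply Dk).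
  assert (Hsum : is_RInt (fun x => df x * k x + f x * dk x) a b 0).
  { replace 0 with (minus (f b * k b) (f a * k a))
      by (rewrite Ha, Hb; unfold minus, plus, opp; simpl; ring).
    apply (is_RInt_derive (fun x => f x * k x)).
    - intros x _. apply (is_derive_mult f k); [apply Df | apply Dk | intros; apply Rmult_comm].
    - intros x _. apply (continuous_plus (V := R_NormedModule));
        apply (continuous_mult (K := R_AbsRing)); auto. }
  assert (Hint : forall u v : R -> R, (forall x, continuous u x) -> (forall x, continuous v x) ->
                 is_RInt (fun x => u x * v x) a b (RInt (fun x => u x * v x) a b)).
  { intros u v Hu Hv. apply (RInt_correct (V := R_CompleteNormedModule)), ex_RInt_continuous.
    intros; apply (continuous_mult (K := R_AbsRing)); auto. }
  assert (E : plus (RInt (fun x => df x * k x) a b) (RInt (fun x => f x * dk x) a b) = 0).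
  { transitivity (RInt (fun x => df x * k x + f x * dk x) a b).
    - symmetry. apply is_RInt_unique, (is_RInt_plus (V := R_NormedModule)); apply Hint; auto.
    - apply is_RInt_unique, Hsum. }
  unfold plus in E; simpl in E. lra.
Qed.

Lemma RInt_odd (f : R -> R) (a : R) :
  (forall x, f (- x) = - f x) -> ex_RInt f (- a) a -> RInt f (- a) a = 0.
Proof.
  intros Hodd Hex.
  assert (H : is_RInt f a (- a) (RInt f (- a) a)).
  { apply (is_RInt_ext (V := R_NormedModule)) with (fun x => opp (f (- x))).
    - intros x _. unfold opp; simpl. rewrite Hodd. ring.
    - apply (is_RInt_comp_opp (V := R_NormedModule)). rewrite Ropp_involutive.
      apply (RInt_correct (V := R_CompleteNormedModule)), Hex. }
  apply (is_RInt_swap (V := R_NormedModule)), (is_RInt_unique (V := R_CompleteNormedModule)) in H.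
  unfold opp in H; simpl in H. lra.
Qed.

Lemma RInt_C_pair (u v : R -> R) (a b : R) :
  ex_RInt u a b -> ex_RInt v a b ->
  RInt (V := C_R_CompleteNormedModule) (fun x => (u x, v x) : C) a b = (RInt u a b, RInt v a b).
Proof.
  intros Hu Hv. apply (is_RInt_unique (V := C_R_CompleteNormedModule)).
  apply (is_RInt_fct_extend_pair (U := R_NormedModule) (V := R_NormedModule));
    apply (RInt_correct (V := R_CompleteNormedModule)); assumption.
Qed.

Definition bump_arg (x : R) : R := x * (1/2 - x).

Definition g (x : R) : R := poly_expinv (fun _ => 1) (bump_arg x).

Definition h (x : R) : R := (1/2 - 2 * x) * poly_expinv (fun y => y ^ 2) (bump_arg x).

Lemma bump_arg_nonpos x : x <= 0 \/ 1/2 <= x -> bump_arg x <= 0.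
Proof. unfold bump_arg. intros [Hx | Hx]; nra. Qed.

Lemma g_vanishes x : x <= 0 \/ 1/2 <= x -> g x = 0.
Proof. intros Hx. apply poly_expinv_nonpos, bump_arg_nonpos, Hx. Qed.

Lemma h_vanishes x : x <= 0 \/ 1/2 <= x -> h x = 0.
Proof. intros Hx. unfold h. rewrite poly_expinv_nonpos by now apply bump_arg_nonpos. ring. Qed.

Lemma g_derive x : is_derive g x (h x).
Proof.
  assert (Hexp : poly_expinv (fun y => y ^ 2) (bump_arg x)
                 = poly_expinv (fun y => y ^ 2 * (1 - 0)) (bump_arg x)).
  { unfold poly_expinv. destruct Rlt_dec; [ring | reflexivity]. }
  unfold h. rewrite Hexp.
  apply (is_derive_comp (poly_expinv (fun _ => 1)) bump_arg).
  - apply is_derive_poly_expinv; [apply is_poly_const | intro; apply (is_derive_const 1)].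
  - unfold bump_arg. auto_derive; [exact I | ring].
Qed.

Lemma h_smooth : smooth h.
Proof.
  apply (poly_expinv_comb_smooth bump_arg).
  - apply is_poly_ext with (fun x => x * (1/2 + (-1) * x)); [intro; unfold bump_arg; ring|].
    apply is_poly_mult; [apply is_poly_id | apply is_poly_affine].
  - apply poly_expinv_comb_term; [|apply is_poly_pow].
    apply is_poly_ext with (fun x => 1/2 + (-2) * x); [intro; ring | apply is_poly_affine].
Qed.

Lemma h_continuous x : continuous h x.
Proof. apply (ex_derive_continuous (V := R_NormedModule)), (h_smooth 1%nat). Qed.

Lemma g_continuous x : continuous g x.
Proof. apply (ex_derive_continuous (V := R_NormedModule)). exists (h x). apply g_derive. Qed.

Lemma g_range x : 0 <= g x <= 1.
Proof.
  unfold g, poly_expinv. destruct Rlt_dec as [H | _]; [|lra].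
  rewrite Rmult_1_l. split; [left; apply exp_pos|].
  rewrite <- exp_0. left. apply exp_increasing.
  assert (0 < / bump_arg x) by (apply Rinv_0_lt_compat; exact H). lra.
Qed.

Lemma g_pos x : 0 < x < 1/2 -> 0 < g x.
Proof.
  intros Hx. unfold g, poly_expinv. destruct Rlt_dec as [_ | H].
  - rewrite Rmult_1_l. apply exp_pos.
  - exfalso. apply H. unfold bump_arg. nra.
Qed.

Lemma h_compact_support : compact_support h.
Proof.
  exists 1. intros x Hx. apply h_vanishes.
  destruct (Rle_dec 0 x); [right; rewrite Rabs_pos_eq in Hx; lra | left; lra].
Qed.

Lemma h_support_in_nonneg : support_in_nonneg h.
Proof. intros x Hx. apply h_vanishes. left; lra. Qed.

Definition g_cos (xi : R) : R := RInt (fun x => g x * cos (xi * x)) 0 (1/2).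
Definition g_sin (xi : R) : R := RInt (fun x => g x * sin (xi * x)) 0 (1/2).
Definition g_mass : R := RInt g 0 (1/2).

Lemma ex_RInt_g_mult (f : R -> R) : (forall x, continuous f x) ->
  ex_RInt (fun x => g x * f x) 0 (1/2).
Proof.
  intros Hf. apply (ex_RInt_continuous (V := R_CompleteNormedModule)). intros x _.
  apply (continuous_mult (K := R_AbsRing)); [apply g_continuous | apply Hf].
Qed.

Lemma g_cos_continuous xi : continuous g_cos xi.
Proof.
  apply (continuous_RInt_lipschitz_kernel g cos (1/2) 1); [lra | apply g_continuous | | apply cos_lipschitz].
  intros x _. pose proof (g_range x). rewrite Rabs_pos_eq; lra.
Qed.

Lemma g_sin_continuous xi : continuous g_sin xi.
Proof.
  apply (continuous_RInt_lipschitz_kernel g sin (1/2) 1); [lra | apply g_continuous | | apply sin_lipschitz].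
  intros x _. pose proof (g_range x). rewrite Rabs_pos_eq; lra.
Qed.

Lemma g_cos_opp xi : g_cos (- xi) = g_cos xi.
Proof. apply RInt_ext. intros x _. now rewrite Ropp_mult_distr_l_reverse, cos_neg. Qed.

Lemma g_sin_opp xi : g_sin (- xi) = - g_sin xi.
Proof.
  unfold g_sin. rewrite <- (RInt_opp (V := R_CompleteNormedModule))
    by apply ex_RInt_g_mult, continuous_sin_lin.
  apply RInt_ext. intros x _. rewrite Ropp_mult_distr_l_reverse, sin_neg.
  unfold opp; simpl. ring.
Qed.

Lemma fourier_h xi : fourier h xi = (xi * g_sin xi, - xi * g_cos xi).
Proof.
  rewrite (fourier_of_support h 0 (1/2)); [|lra | apply h_continuous | apply h_vanishes].
  assert (Hscal : forall (c : R) (T : R -> R), (forall x, continuous T x) ->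
            RInt (fun x => g x * (c * T x)) 0 (1/2) = c * RInt (fun x => g x * T x) 0 (1/2)).
  { intros c T HT. rewrite <- (RInt_scal (V := R_CompleteNormedModule)) by now apply ex_RInt_g_mult.
    apply RInt_ext. intros x _. unfold scal; simpl; unfold mult; simpl. ring. }
  f_equal.
  - rewrite (RInt_parts_vanishing g h (fun x => cos (xi * x)) (fun x => - xi * sin (xi * x)));
      [| apply g_derive | | apply h_continuous | | apply g_vanishes; lra | apply g_vanishes; lra].
    + rewrite (Hscal (- xi) (fun x => sin (xi * x))) by apply continuous_sin_lin. unfold g_sin; simpl; lra.
    + intro x. auto_derive; [exact I | ring].
    + intro x. apply (continuous_mult (K := R_AbsRing)); [apply continuous_const | apply continuous_sin_lin].
  - rewrite (RInt_parts_vanishing g h (fun x => sin (xi * x)) (fun x => xi * cos (xi * x)));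
      [| apply g_derive | | apply h_continuous | | apply g_vanishes; lra | apply g_vanishes; lra].
    + rewrite (Hscal xi (fun x => cos (xi * x))) by apply continuous_cos_lin. unfold g_cos; simpl; lra.
    + intro x. auto_derive; [exact I | ring].
    + intro x. apply (continuous_mult (K := R_AbsRing)); [apply continuous_const | apply continuous_cos_lin].
Qed.

Lemma g_mass_pos : 0 < g_mass.
Proof. apply RInt_gt_0; [lra | apply g_pos | intros; apply g_continuous]. Qed.

Lemma RInt_g_mult_le (f1 f2 : R -> R) :
  (forall x, continuous f1 x) -> (forall x, continuous f2 x) ->
  (forall x, 0 < x < 1/2 -> f1 x <= f2 x) ->
  RInt (fun x => g x * f1 x) 0 (1/2) <= RInt (fun x => g x * f2 x) 0 (1/2).
Proof.
  intros C1 C2 H12. apply RInt_le; [lra | now apply ex_RInt_g_mult | now apply ex_RInt_g_mult|].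
  intros x Hx. apply Rmult_le_compat_l; [apply g_range | now apply H12].
Qed.

Lemma RInt_g_mult_const (c : R) : RInt (fun x => g x * c) 0 (1/2) = c * g_mass.
Proof.
  unfold g_mass. rewrite <- (RInt_scal (V := R_CompleteNormedModule))
    by (apply (ex_RInt_continuous (V := R_CompleteNormedModule)); intros; apply g_continuous).
  apply RInt_ext. intros x _. unfold scal; simpl; unfold mult; simpl. ring.
Qed.

Lemma g_cos_ge xi : -1 <= xi <= 1 -> 7/8 * g_mass <= g_cos xi.
Proof.
  intros Hxi. rewrite <- RInt_g_mult_const.
  apply RInt_g_mult_le; [intros; apply continuous_const | apply continuous_cos_lin|].
  intros x Hx. pose proof (cos_ge_1_sub_sq (xi * x)).
  assert (xi * xi <= 1) by nra. assert (x * x <= 1/4) by nra.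
  assert ((xi * x) ^ 2 <= 1/4).
  { replace ((xi * x) ^ 2) with ((xi * xi) * (x * x)) by ring.
    apply Rle_trans with (1 * (x * x)); [apply Rmult_le_compat_r; nra | lra]. }
  lra.
Qed.

Lemma Rabs_g_sin_le xi : -1 <= xi <= 1 -> Rabs (g_sin xi) <= 1/2 * g_mass.
Proof.
  intros Hxi.
  assert (Hs : forall x, 0 < x < 1/2 -> Rabs (sin (xi * x)) <= 1/2).
  { intros x Hx. eapply Rle_trans; [apply Rabs_sin_le|].
    rewrite Rabs_mult, (Rabs_pos_eq x) by lra.
    assert (Rabs xi <= 1) by (apply Rabs_le; lra). pose proof (Rabs_pos xi). nra. }
  apply Rabs_le. split.
  - replace (- (1/2 * g_mass)) with (-1/2 * g_mass) by lra. rewrite <- RInt_g_mult_const.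
    apply RInt_g_mult_le; [intros; apply continuous_const | apply continuous_sin_lin|].
    intros x Hx. specialize (Hs x Hx). apply Rabs_le_between in Hs. lra.
  - rewrite <- RInt_g_mult_const.
    apply RInt_g_mult_le; [apply continuous_sin_lin | intros; apply continuous_const|].
    intros x Hx. specialize (Hs x Hx). apply Rabs_le_between in Hs. lra.
Qed.

Definition spectral_re (kappa xi : R) : R :=
  / (xi ^ 2 + kappa) * xi ^ 2 * (g_sin xi ^ 2 - g_cos xi ^ 2).
Definition spectral_im (kappa xi : R) : R :=
  / (xi ^ 2 + kappa) * xi ^ 2 * (-2 * (g_sin xi * g_cos xi)).

Lemma fourier_h_pairing kappa xi :
  scal (/ (xi ^ 2 + kappa)) (Cmult (Cconj (fourier h (- xi))) (fourier h xi))
  = (spectral_re kappa xi, spectral_im kappa xi).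
Proof.
  rewrite !fourier_h, g_cos_opp, g_sin_opp. unfold spectral_re, spectral_im, Cmult, Cconj. simpl.
  unfold scal; simpl; unfold prod_scal; simpl; unfold scal; simpl; unfold mult; simpl.
  f_equal; ring.
Qed.

Lemma continuous_sq_div_sq_plus (kappa xi : R) : 0 < kappa ->
  continuous (fun xi => / (xi ^ 2 + kappa) * xi ^ 2) xi.
Proof.
  intros Hk. apply (ex_derive_continuous (V := R_NormedModule)).
  auto_derive. pose proof (pow2_ge_0 xi). lra.
Qed.

Lemma spectral_re_continuous kappa xi : 0 < kappa -> continuous (spectral_re kappa) xi.
Proof.
  intros Hk. unfold spectral_re.
  apply (continuous_mult (K := R_AbsRing)); [now apply continuous_sq_div_sq_plus|].
  apply (continuous_minus (V := R_NormedModule)); apply continuous_pow_comp;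
    [apply g_sin_continuous | apply g_cos_continuous].
Qed.

Lemma spectral_im_continuous kappa xi : 0 < kappa -> continuous (spectral_im kappa) xi.
Proof.
  intros Hk. unfold spectral_im.
  apply (continuous_mult (K := R_AbsRing)); [now apply continuous_sq_div_sq_plus|].
  apply (continuous_mult (K := R_AbsRing)); [apply continuous_const|].
  apply (continuous_mult (K := R_AbsRing)); [apply g_sin_continuous | apply g_cos_continuous].
Qed.

Lemma spectral_im_odd kappa xi : spectral_im kappa (- xi) = - spectral_im kappa xi.
Proof. unfold spectral_im. rewrite g_cos_opp, g_sin_opp. replace ((- xi) ^ 2) with (xi ^ 2) by ring. ring. Qed.

Lemma spectral_re_le kappa xi : 0 < kappa <= 2 -> -1 <= xi <= 1 ->
  spectral_re kappa xi <= - (g_mass ^ 2 / 6) * xi ^ 2.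
Proof.
  intros Hk Hxi. pose proof g_mass_pos as Hm.
  pose proof (g_cos_ge xi Hxi) as HC. pose proof (Rabs_g_sin_le xi Hxi) as HS.
  assert (HS2 : g_sin xi ^ 2 <= g_mass ^ 2 / 4).
  { rewrite <- pow2_abs. replace (g_mass ^ 2 / 4) with ((1/2 * g_mass) ^ 2) by field.
    apply pow_incr. split; [apply Rabs_pos | exact HS]. }
  assert (HC2 : 49/64 * g_mass ^ 2 <= g_cos xi ^ 2).
  { replace (49/64 * g_mass ^ 2) with ((7/8 * g_mass) ^ 2) by field.
    apply pow_incr. split; [lra | exact HC]. }
  assert (Hw : 1/3 <= / (xi ^ 2 + kappa)).
  { assert (xi ^ 2 <= 1) by (simpl; nra). pose proof (pow2_ge_0 xi).
    replace (1/3) with (/ 3) by field. apply Rinv_le_contravar; lra. }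
  assert (Hxi2 : 0 <= xi ^ 2) by apply pow2_ge_0.
  assert (Hgap : g_sin xi ^ 2 - g_cos xi ^ 2 <= - (1/2) * g_mass ^ 2) by nra.
  assert (HW : xi ^ 2 / 3 <= / (xi ^ 2 + kappa) * xi ^ 2) by nra.
  assert (0 < g_mass ^ 2) by (apply pow_lt; lra).
  unfold spectral_re. nra.
Qed.

Lemma RInt_spectral_re_neg kappa : 0 < kappa <= 2 -> RInt (spectral_re kappa) (-1) 1 < 0.
Proof.
  intros Hk.
  assert (Hsq : RInt (fun xi => - (g_mass ^ 2 / 6) * xi ^ 2) (-1) 1 = - (g_mass ^ 2 / 9)).
  { apply (is_RInt_unique (V := R_CompleteNormedModule)).
    replace (- (g_mass ^ 2 / 9)) with (scal (- (g_mass ^ 2 / 6)) (1 ^ 3 / INR 3 - (-1) ^ 3 / INR 3))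
      by (unfold scal; simpl; unfold mult; simpl; field).
    apply (is_RInt_scal (V := R_NormedModule)), is_RInt_pow. }
  pose proof g_mass_pos. assert (0 < g_mass ^ 2) by (apply pow_lt; lra).
  apply Rle_lt_trans with (RInt (fun xi => - (g_mass ^ 2 / 6) * xi ^ 2) (-1) 1); [|lra].
  apply RInt_le; [lra | | |].
  - apply (ex_RInt_continuous (V := R_CompleteNormedModule)). intros. apply spectral_re_continuous. lra.
  - apply (ex_RInt_continuous (V := R_CompleteNormedModule)). intros.
    apply (continuous_mult (K := R_AbsRing)); [apply continuous_const | apply continuous_pow_comp, continuous_id].
  - intros xi Hxi. apply spectral_re_le; lra.
Qed.

Theorem lemma3p3 (kappa : R) (hk : 1 <= kappa <= 2) :
  exists h : R -> R,
    smooth h /\ compact_support h /\ support_in_nonneg h /\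
    exists r : R, r < 0 /\
      RInt (V := C_R_CompleteNormedModule)
        (fun xi : R =>
           scal (/ (xi ^ 2 + kappa))
             (Cmult (Cconj (fourier h (- xi))) (fourier h xi)))
        (-1) 1
      = RtoC r.
Proof.
  exists h. split; [exact h_smooth|]. split; [exact h_compact_support|].
  split; [exact h_support_in_nonneg|].
  assert (Hk : 0 < kappa <= 2) by lra.
  assert (Hex : forall f : R -> R, (forall xi, continuous f xi) -> ex_RInt f (-1) 1)
    by (intros f Hf; apply (ex_RInt_continuous (V := R_CompleteNormedModule)); auto).
  exists (RInt (spectral_re kappa) (-1) 1). split; [now apply RInt_spectral_re_neg|].
  assert (Him : RInt (spectral_im kappa) (-1) 1 = 0).
  { replace (-1) with (- 1) by ring. apply RInt_odd; [apply spectral_im_odd|].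
    replace (- 1) with (-1) by ring. apply Hex. intro. apply spectral_im_continuous. lra. }
  rewrite (RInt_ext (V := C_R_CompleteNormedModule) _ (fun xi => (spectral_re kappa xi, spectral_im kappa xi)))
    by (intros; apply fourier_h_pairing).
  rewrite RInt_C_pair, Him; [reflexivity | |]; apply Hex; intro;
    [apply spectral_re_continuous | apply spectral_im_continuous]; lra.
Qed.
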